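(* Let $\mathfrak V$ be a vessel on $\Omega\subseteq\mathbb R$. Then for all $x\in\Omega$ and all $u\in D(A)$, $\sigma_1\frac{d}{dx}[C(x)\mathbb X^{-1}(x)]u=\sigma_2C(x)\mathbb X^{-1}(x)Au+\gamma_*(x)C(x)\mathbb X^{-1}(x)u$, and $\frac{d}{dx}[\mathbb X^{-1}(x)B(x)]\sigma_1=A_\zeta\mathbb X^{-1}(x)B(x)\sigma_2-\mathbb X^{-1}(x)B(x)\gamma_*(x)$.
   Context: A Krein space $\mathcal K$ is a Hilbert space with an extra continuous Hermitian (possibly indefinite) sesquilinear form; adjoints are with respect to it. Fix $2\times2$ matrices $\sigma_1$ (invertible, self-adjoint), $\sigma_2=\sigma_2^*$, $\gamma=-\gamma^*$. A node $(C,A_\zeta,\mathbb X,A,B;\sigma_1)$: bounded $C:\mathcal K\to\mathbb C^2$, $\mathbb X:\mathcal K\to\mathcal K$, $B:\mathbb C^2\to\mathcal K$, generators $A,A_\zeta$ of strongly continuous groups with common dense domain $D(A)=D(A_\zeta)$, with $\mathbb X(D(A))\subseteq D(A)$ and $A\mathbb Xu+\mathbb XA_\zeta u+B\sigma_1Cu=0$ for $u\in D(A)$; invertible if $\mathbb X$ is boundedly invertible and $\mathbb X^{-1}(D(A))\subseteq D(A)$. A prevessel: fixed $A,A_\zeta$ and bounded operators $C(x),\mathbb X(x),B(x)$ differentiable in $x\in\mathbb R$, each tuple a node, $B(x)\sigma_2e\in D(A)$ for $e\in\mathbb C^2$, with $\partial_xB=-(AB\sigma_2+B\gamma)\sigma_1^{-1}$,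 $\partial_xCu=\sigma_1^{-1}(-\sigma_2CA_\zeta u+\gamma Cu)$ ($u\in D(A)$), $\partial_x\mathbb X=B\sigma_2C$. A vessel on $\Omega$: a prevessel whose node is invertible for all $x\in\Omega$, with $\gamma_*(x)=\gamma+\sigma_2C\mathbb X^{-1}B\sigma_1-\sigma_1C\mathbb X^{-1}B\sigma_2$ on $\Omega$. *)

From HB Require Import structures.
From mathcomp Require Import all_boot all_order all_algebra.
From mathcomp Require Import complex.
From mathcomp Require Import boolp classical_sets functions reals topology normedtype.
Import numFieldNormedType.Exports.
Export numFieldNormedType.Exports.

Set Implicit Arguments.
Unset Strict Implicit.
Unset Printing Implicit Defensive.

Import Order.TTheory GRing.Theory Num.Theory.
Local Open Scope classical_set_scope.
Local Open Scope ring_scope.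
Local Open Scope complex_scope.

Definition mxadj (R : realType) (m n : nat) (M : 'M[R[i]]_(m, n)) : 'M[R[i]]_(n, m) :=
  map_mx (@conjc R) M^T.

Definition bounded_op (R : realType) (U W : normedModType R[i]) (T : U -> W) : Prop :=
  linear T /\ exists M : R[i], forall u, `|T u| <= M * `|u|.

Definition hilbert_ip (R : realType) (K : normedModType R[i]) (ip : K -> K -> R[i]) : Prop :=
  (forall v, linear (fun u => ip u v)) /\
  (forall u v, ip v u = (ip u v)^*) /\
  (forall u, ip u u = `|u| ^+ 2).

Definition krein_form (R : realType) (K : normedModType R[i]) (kf : K -> K -> R[i]) : Prop :=
  (forall v, linear (fun u => kf u v)) /\
  (forall u v, kf v u = (kf u v)^*) /\
  (exists M : R[i], forall u v, `|kf u v| <= M * `|u| * `|v|).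

Definition C0_group (R : realType) (K : normedModType R[i]) (S : R -> K -> K) : Prop :=
  (forall t, bounded_op (S t)) /\
  (forall u, S 0 u = u) /\
  (forall s t u, S (s + t) u = S s (S t u)) /\
  (forall u, continuous (fun t => S t u)).

Definition generator (R : realType) (K : normedModType R[i]) (S : R -> K -> K)
  (dom : set K) (A : K -> K) : Prop :=
  forall u, (dom u <-> exists l : K, (h^-1)%:C *: (S h u - u) @[h --> (0:R)^'+] --> l) /\
            (dom u -> (h^-1)%:C *: (S h u - u) @[h --> (0:R)^'+] --> A u).

Definition has_opderiv (R : realType) (U W : normedModType R[i]) (T : R -> U -> W)
  (x : R) (D : U -> W) : Prop :=
  forall eps : R, 0 < eps -> exists2 delta : R, 0 < delta &
    forall h : R, h != 0 -> `|h| < delta ->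
      forall u, `|(h^-1)%:C *: (T (x + h) u - T x u) - D u| <= eps%:C * `|u|.

Definition bounded_inverse (R : realType) (K : normedModType R[i]) (X Y : K -> K) : Prop :=
  bounded_op Y /\ (forall u, X (Y u) = u) /\ (forall u, Y (X u) = u).

(* Node (C, A_zeta, X, A, B; sigma1) (the generator conditions on A, A_zeta
   are imposed separately). *)
Definition is_node (R : realType) (K : normedModType R[i])
  (C : K -> 'cV[R[i]]_2) (Az : K -> K) (X : K -> K) (A : K -> K) (B : 'cV[R[i]]_2 -> K)
  (s1 : 'M[R[i]]_2) (dom : set K) : Prop :=
  bounded_op C /\ bounded_op X /\ bounded_op B /\
  (forall u, dom u -> dom (X u)) /\
  (forall u, dom u -> A (X u) + X (Az u) + B (s1 *m C u) = 0).

Definition prevessel (R : realType) (K : normedModType R[i])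
  (s1 s2 g : 'M[R[i]]_2) (A Az : K -> K) (dom : set K)
  (C : R -> K -> 'cV[R[i]]_2) (X : R -> K -> K) (B : R -> 'cV[R[i]]_2 -> K) : Prop :=
  forall x : R,
    is_node (C x) Az (X x) A (B x) s1 dom /\
    (forall e, dom (B x (s2 *m e))) /\
    has_opderiv B x (fun e => - (A (B x (s2 *m (invmx s1 *m e))) + B x (g *m (invmx s1 *m e)))) /\
    (exists D, has_opderiv C x D /\
       forall u, dom u -> D u = invmx s1 *m (- (s2 *m C x (Az u)) + g *m C x u)) /\
    has_opderiv X x (fun u => B x (s2 *m C x u)).

Definition gamma_star (R : realType) (K : normedModType R[i])
  (s1 s2 g : 'M[R[i]]_2) (C : R -> K -> 'cV[R[i]]_2) (Xinv : R -> K -> K)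
  (B : R -> 'cV[R[i]]_2 -> K) (x : R) (e : 'cV[R[i]]_2) : 'cV[R[i]]_2 :=
  g *m e + s2 *m C x (Xinv x (B x (s1 *m e))) - s1 *m C x (Xinv x (B x (s2 *m e))).

From HB Require Import structures.
From mathcomp Require Import all_boot all_order all_algebra.
From mathcomp Require Import complex.
From mathcomp Require Import boolp classical_sets functions reals topology normedtype sequences.
From mathcomp Require Import ring lra.
Import numFieldNormedType.Exports.
Import Order.TTheory GRing.Theory Num.Theory.
Local Open Scope classical_set_scope.
Local Open Scope ring_scope.
Local Open Scope complex_scope.
Set Implicit Arguments. Unset Strict Implicit. Unset Printing Implicit Defensive.

(* Both identities are the product rule for C(x) X(x)^-1 and X(x)^-1 B(x),
   combined with (X^-1)' = - X^-1 X' X^-1 = - X^-1 B sigma2 C X^-1 and with the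
   node equation on D(A), read as X^-1 A = - A_zeta X^-1 - X^-1 B sigma1 C X^-1.
   The analytic content is the operator-norm differentiability of the inverse:
   when ||X(x)^-1|| ||X(x+h) - X(x)|| <= 1/2, a contraction argument inverts
   X(x+h) with ||X(x+h)^-1|| <= 2 ||X(x)^-1||, and this locally uniform bound
   yields continuity and then differentiability of y |-> X(y)^-1. *)

Section RealNorm.
Variables (R : realType) (V : normedModType R[i]).

(* The norm of [V] is [R[i]]-valued but real; [rnorm] is its real part. *)
Definition rnorm (v : V) : R := complex.Re `|v|.

Lemma rnormE v : `|v| = (rnorm v)%:C.
Proof. by rewrite /rnorm RRe_real // normr_real. Qed.

Lemma rnorm_ge0 v : 0 <= rnorm v.
Proof. by rewrite -ler0c -rnormE. Qed.

Lemma rnormD a b : rnorm (a + b) <= rnorm a + rnorm b.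
Proof. by rewrite -lecR rmorphD /= -!rnormE ler_normD. Qed.

Lemma rnormN a : rnorm (- a) = rnorm a.
Proof. by rewrite /rnorm normrN. Qed.

Lemma rnormB a b : rnorm (a - b) <= rnorm a + rnorm b.
Proof. by rewrite -(rnormN b) rnormD. Qed.

Lemma rnorm0 : rnorm 0 = 0.
Proof. by rewrite /rnorm normr0. Qed.

Lemma rnorm_le0 v : rnorm v <= 0 -> v = 0.
Proof.
move=> v_le0; apply/normr0_eq0; rewrite rnormE.
suff -> : rnorm v = 0 by [].
by apply/eqP; rewrite eq_le v_le0 rnorm_ge0.
Qed.

Lemma rnormZ (r : R) v : rnorm (r%:C *: v) = `|r| * rnorm v.
Proof.
have normcR : `|r%:C| = `|r|%:C.
  by rewrite normc_def /= expr0n /= addr0 sqrtr_sqr.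
by rewrite /rnorm normrZ normcR rnormE /= !mulr0 subr0.
Qed.
End RealNorm.

Section LinearFacts.
Variables (R : realType) (U W : lmodType R[i]) (T : U -> W).
Hypothesis linT : linear T.

Lemma lin0 : T 0 = 0.
Proof.
have := linT 1 0 0; rewrite !scale1r !addr0 => T0.
by apply: (@addrI _ (T 0)); rewrite addr0 -T0.
Qed.

Lemma linD u v : T (u + v) = T u + T v.
Proof. by have := linT 1 u v; rewrite !scale1r. Qed.

Lemma linZ a u : T (a *: u) = a *: T u.
Proof. by have := linT a u 0; rewrite !addr0 lin0 addr0. Qed.

Lemma linN u : T (- u) = - T u.
Proof. by rewrite -scaleN1r linZ scaleN1r. Qed.

Lemma linB u v : T (u - v) = T u - T v.
Proof. by rewrite linD linN. Qed.
End LinearFacts.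

Section OperatorDerivative.
Variable R : realType.
Implicit Types (U V W : normedModType R[i]).

Definition bounded_by U W (T : U -> W) (c : R) := forall u, rnorm (T u) <= c * rnorm u.

Definition opderiv U W (T : R -> U -> W) (x : R) (D : U -> W) :=
  forall eps : R, 0 < eps -> exists2 delta : R, 0 < delta &
    forall h : R, h != 0 -> `|h| < delta ->
      bounded_by (fun u => (h^-1)%:C *: (T (x + h) u - T x u) - D u) eps.

Definition opcontinuous U W (T : R -> U -> W) (x : R) :=
  forall eps : R, 0 < eps -> exists2 delta : R, 0 < delta &
    forall h : R, `|h| < delta -> bounded_by (fun u => T (x + h) u - T x u) eps.

Definition locally_bounded_op U W (T : R -> U -> W) (x : R) :=
  exists2 delta : R, 0 < delta & forall h : R, `|h| < delta ->
    linear (T (x + h)) /\ exists2 c, 0 <= c & bounded_by (T (x + h)) c.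

Lemma bounded_opP U W (T : U -> W) : bounded_op T -> exists2 c, 0 <= c & bounded_by T c.
Proof.
case=> _ [M HM]; exists `|complex.Re M|; first exact: normr_ge0.
move=> u; have := HM u; rewrite !rnormE lecE => /andP[_].
have -> : complex.Re (M * (rnorm u)%:C) = complex.Re M * rnorm u.
  by case: M {HM} => a b /=; rewrite mulr0 subr0.
move=> /le_trans; apply; apply: ler_wpM2r; first exact: rnorm_ge0.
exact: real_ler_norm (num_real _).
Qed.

Lemma has_opderivE U W (T : R -> U -> W) x D : has_opderiv T x D <-> opderiv T x D.
Proof.
by split=> dT eps /dT [d d0 Hd]; exists d => // h h0 hd u; have := Hd h h0 hd u;
  rewrite !rnormE -rmorphM lecR.
Qed.

Lemma bounded_op_locally U W (T : R -> U -> W) x :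
  (forall y, bounded_op (T y)) -> locally_bounded_op T x.
Proof. by move=> bT; exists 1 => // h _; split; [exact: (bT _).1 | exact: bounded_opP]. Qed.

Lemma locally_bounded_op_at U W (T : R -> U -> W) x :
  locally_bounded_op T x -> exists2 c, 0 <= c & bounded_by (T x) c.
Proof. by case=> d d0 /(_ 0); rewrite normr0 addr0 => /(_ d0) []. Qed.

Lemma opderiv_bounded U W (T : R -> U -> W) x D :
  opderiv T x D -> locally_bounded_op T x -> exists2 c, 0 <= c & bounded_by D c.
Proof.
move=> dT locT; have [d1 d10 H1] := dT 1 ltr01; have [d0 d00 H0] := locT.
set m := Num.min d1 d0; have m0 : 0 < m by rewrite lt_min d10 d00.
set h := m / 2; have h0 : 0 < h by rewrite /h; lra.
have : `|h| < m by rewrite gtr0_norm /h //; lra.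
rewrite lt_min => /andP[hd1 hd0].
have [_ [c1 c10 Th]] := H0 h hd0; have [c2 c20 Tx] := locally_bounded_op_at locT.
exists (`|h^-1| * (c1 + c2) + 1); first by rewrite addr_ge0 // mulr_ge0 // addr_ge0.
move=> u; have := H1 h (lt0r_neq0 h0) hd1 u; rewrite /= mul1r.
set q := (h^-1)%:C *: _ => Hq.
have -> : D u = q - (q - D u) by rewrite opprB addrC subrK.
apply: (le_trans (rnormB _ _)); rewrite mulrDl mul1r; apply: lerD => //.
rewrite /q rnormZ -mulrA; apply: ler_wpM2l; first exact: normr_ge0.
by rewrite mulrDl; apply: (le_trans (rnormB _ _)); apply: lerD.
Qed.

Lemma opderiv_continuous U W (T : R -> U -> W) x D :
  opderiv T x D -> locally_bounded_op T x -> opcontinuous T x.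
Proof.
move=> dT locT eps e0; have [c c0 Dc] := opderiv_bounded dT locT.
have [d d0 Hd] := dT 1 ltr01; have c1 : 0 < 1 + c by rewrite ltr_pwDl.
exists (Num.min d (eps / (1 + c))); first by rewrite lt_min d0 divr_gt0.
move=> h; rewrite lt_min => /andP[hd he] u /=.
have [->|h0] := eqVneq h 0.
  by rewrite addr0 subrr rnorm0 mulr_ge0 ?rnorm_ge0 ?ltW.
have := Hd h h0 hd u; rewrite /= mul1r; set q := (h^-1)%:C *: _ => Hq.
have -> : T (x + h) u - T x u = h%:C *: q by rewrite /q scalerA -rmorphM mulfV // scale1r.
have qc : rnorm q <= (1 + c) * rnorm u.
  rewrite -(subrK (D u) q) mulrDl mul1r.
  by apply: (le_trans (rnormD _ _)); apply: lerD.
rewrite rnormZ; apply: (le_trans (ler_wpM2l (normr_ge0 _) qc)).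
rewrite mulrA; apply: ler_wpM2r; first exact: rnorm_ge0.
by rewrite -ler_pdivlMr // ltW.
Qed.

Lemma opcontinuous_bounded U W (T : R -> U -> W) x c :
  opcontinuous T x -> bounded_by (T x) c ->
  exists2 delta, 0 < delta & forall h, `|h| < delta -> bounded_by (T (x + h)) (c + 1).
Proof.
move=> cT Tc; have [d d0 Hd] := cT 1 ltr01; exists d => // h hd u.
rewrite -(subrK (T x u) (T (x + h) u)) mulrDl mul1r addrC.
apply: (le_trans (rnormD _ _)); apply: lerD; [exact: Tc | by have := Hd h hd u; rewrite mul1r].
Qed.

Lemma scale_diff_split (F : fieldType) (M : lmodType F) (k : F) (p q r s t w : M) :
  k *: ((p + q) - r) - (w + s) = (k *: (p - r) - s) + (k *: q - t) + (t - w).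
Proof.
rewrite -[RHS]addrA subrKA scalerBr scalerDr scalerBr opprD.
rewrite -!addrA; congr (_ + _); rewrite addrC -!addrA; congr (_ + _).
by rewrite addrC addrA addrC.
Qed.

(* The three summands of the difference quotient are each bounded by eps/3. *)
Lemma opderiv_comp_bounded U V W (F : R -> V -> W) (G : R -> U -> V) x DF DG cG cDG cF d0 :
  opderiv F x DF -> opderiv G x DG -> 0 <= cG -> bounded_by (G x) cG ->
  0 <= cDG -> bounded_by DG cDG -> 0 < d0 -> 0 <= cF ->
  (forall h, `|h| < d0 -> linear (F (x + h)) /\ bounded_by (F (x + h)) cF) ->
  opcontinuous F x ->
  opderiv (fun y u => F y (G y u)) x (fun u => F x (DG u) + DF (G x u)).
Proof.
move=> dF dG cG0 Gc cDG0 DGc d00 cF0 Fnear cF_ eps eps0.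
set M := 1 + cG + cF + cDG; have M0 : 0 < M by rewrite /M; lra.
set e := eps / (3%:R * M).
have e0 : 0 < e by rewrite /e divr_gt0 // mulr_gt0 // ltr0n.
have eM : e * M = eps / 3%:R.
  by rewrite /e invfM mulrA -mulrA mulVf ?gt_eqF // mulr1.
have [d1 d10 H1] := dF e e0; have [d2 d20 H2] := dG e e0; have [d3 d30 H3] := cF_ e e0.
exists (Num.min d0 (Num.min d1 (Num.min d2 d3))); first by rewrite !lt_min d00 d10 d20 d30.
move=> h h0; rewrite !lt_min => /and4P[hd0 hd1 hd2 hd3] u /=.
have [linF Fc] := Fnear h hd0.
rewrite -[G (x + h) u](subrK (G x u)) [_ + G x u]addrC (linD linF).
rewrite (scale_diff_split _ _ _ _ _ (F (x + h) (DG u))) -(linZ linF) -(linB linF).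
have -> : eps * rnorm u = eps / 3%:R * rnorm u + eps / 3%:R * rnorm u + eps / 3%:R * rnorm u.
  by lra.
have u0 := rnorm_ge0 u; rewrite -eM.
apply: (le_trans (rnormD _ _)); apply: lerD; first apply: (le_trans (rnormD _ _)); first apply: lerD.
- apply: (le_trans (H1 h h0 hd1 (G x u))); rewrite -mulrA ler_pM2l //.
  by apply: (le_trans (Gc u)); apply: ler_wpM2r => //; rewrite /M; lra.
- apply: (le_trans (Fc _)); apply: (le_trans (ler_wpM2l cF0 (H2 h h0 hd2 u))).
  rewrite mulrCA -[X in _ <= X]mulrA ler_pM2l //.
  by apply: ler_wpM2r => //; rewrite /M; lra.
- apply: (le_trans (H3 h hd3 (DG u))); rewrite -mulrA ler_pM2l //.
  by apply: (le_trans (DGc u)); apply: ler_wpM2r => //; rewrite /M; lra.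
Qed.

Lemma opderiv_comp U V W (F : R -> V -> W) (G : R -> U -> V) x DF DG :
  opderiv F x DF -> opderiv G x DG -> locally_bounded_op F x -> locally_bounded_op G x ->
  opderiv (fun y u => F y (G y u)) x (fun u => F x (DG u) + DF (G x u)).
Proof.
move=> dF dG locF locG.
have [cDG cDG0 DGc] := opderiv_bounded dG locG.
have [cG cG0 Gc] := locally_bounded_op_at locG.
have cF_ := opderiv_continuous dF locF.
have [cF cF0 Fc] := locally_bounded_op_at locF.
have [d1 d10 Fnear] := opcontinuous_bounded cF_ Fc.
have [d0 d00 Floc] := locF.
have d0' : 0 < Num.min d0 d1 by rewrite lt_min d00 d10.
apply: (opderiv_comp_bounded dF dG cG0 Gc cDG0 DGc d0' (addr_ge0 cF0 ler01) _ cF_).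
by move=> h; rewrite lt_min => /andP[/Floc[linF _] /Fnear Fh].
Qed.
End OperatorDerivative.

Section Contraction.
Variables (R : realType) (K : completeNormedModType R[i]) (Q : K -> K) (z : K).
Hypotheses (Q_lin : linear Q) (Q_half : bounded_by Q 2^-1).

Let y n := iter n (fun w => z + Q w) 0.

Let yS n : y n.+1 = z + Q (y n).
Proof. by []. Qed.

Let iter_step n : rnorm (y n.+1 - y n) <= 2^-1 ^+ n * rnorm z.
Proof.
elim: n => [|n IH]; first by rewrite /y /= (lin0 Q_lin) !addr0 subr0 expr0 mul1r.
rewrite !yS opprD addrACA subrr add0r -(linB Q_lin).
by apply: (le_trans (Q_half _)); rewrite exprS -mulrA ler_wpM2l // invr_ge0 ler0n.
Qed.

Let iter_dist n m : (n <= m)%N -> rnorm (y m - y n) <= 2%:R * 2^-1 ^+ n * rnorm z.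
Proof.
set q : R := 2^-1; have q2 : 2%:R * q = 1 by rewrite /q mulfV // pnatr_eq0.
have geom k : rnorm (y (n + k)%N - y n) <= (2%:R * q ^+ n - 2%:R * q ^+ (n + k)) * rnorm z.
  elim: k => [|k IH]; first by rewrite addn0 !subrr rnorm0 mul0r.
  rewrite addnS -(subrK (y (n + k)%N) (y (n + k).+1)) -addrA.
  apply: (le_trans (rnormD _ _)); apply: (le_trans (lerD (iter_step _) IH)).
  rewrite -mulrDl; apply: ler_wpM2r; first exact: rnorm_ge0.
  have -> : 2%:R * q ^+ (n + k).+1 = q ^+ (n + k) by rewrite exprSr mulrCA q2 mulr1.
  lra.
move=> nm; rewrite -(subnKC nm); apply: (le_trans (geom _)).
apply: ler_wpM2r; first exact: rnorm_ge0.
by rewrite lerBlDr lerDl mulr_ge0 ?ler0n ?exprn_ge0 ?invr_ge0 ?ler0n.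
Qed.

Let iter_cvgn : cvgn y.
Proof.
apply/cauchy_cvgP; apply: cauchy_exP => e e0.
have e'0 : 0 < complex.Re e by rewrite -ltcR RRe_real // gtr0_real.
have eE : e = (complex.Re e)%:C by rewrite RRe_real // gtr0_real.
set e' := complex.Re e in eE e'0.
have q0 : 0 <= 2^-1 :> R by rewrite invr_ge0 ler0n.
have : `|2^-1 : R| < 1 by rewrite ger0_norm // invf_lt1 // ltr1n.
move=> /(@cvg_expr R) /cvgrPdist_lt /(_ (e' / (2%:R * rnorm z + 1))) [].
  by rewrite divr_gt0 // ltr_pwDr // mulr_ge0 ?ler0n ?rnorm_ge0.
move=> N _ HN; exists (y N); exists N => // n /= Nn.
rewrite -ball_normE /ball_ /= rnormE eE ltcR -rnormN opprB.
have := HN N (leqnn N); rewrite sub0r normrN ger0_norm ?exprn_ge0 // => qN.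
apply: (le_lt_trans (iter_dist Nn)).
have z0 := rnorm_ge0 z; have qN0 : 0 <= (2^-1 : R) ^+ N := exprn_ge0 N q0.
rewrite ltr_pdivlMr ?ltr_pwDr ?mulr_ge0 ?ler0n // in qN.
set a := _ ^+ N in qN qN0 *; nra.
Qed.

(* [|l - (z + Q l)| <= |l - y N.+1| + |l - y N| / 2] for the limit [l] of the iterates. *)
Lemma contraction_fixpoint : exists w, w = z + Q w.
Proof.
set l := limn y; have yl : y @ \oo --> l := iter_cvgn.
exists l; apply/eqP; rewrite -subr_eq0; apply/eqP; apply: rnorm_le0.
rewrite leNgt; apply/negP; set v := rnorm _ => v0.
have v4 : 0 < (v / 4%:R)%:C by rewrite ltcR divr_gt0 // ltr0n.
have [N _ HN] := proj1 (cvgrPdist_lt _ _) yl _ v4.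
have := HN N.+1 (leqnSn N); have := HN N (leqnn N); rewrite !rnormE !ltcR => h1 h2.
have : v <= rnorm (l - y N.+1) + 2^-1 * rnorm (l - y N).
  have -> : v = rnorm ((l - y N.+1) + (y N.+1 - (z + Q l))) by rewrite addrA subrK.
  apply: (le_trans (rnormD _ _)); apply: lerD => //.
  rewrite yS opprD addrACA subrr add0r -(linB Q_lin) -rnormN -(linN Q_lin) opprB.
  exact: Q_half.
lra.
Qed.
End Contraction.

Section Perturbation.
Variable R : realType.

Lemma perturbation_coercive (V : normedModType R[i]) (X0 X1 P : V -> V) M d :
  bounded_inverse X0 P -> 0 <= M -> bounded_by P M -> linear X1 ->
  bounded_by (fun v => X1 v - X0 v) d -> M * d <= 2^-1 ->
  forall w, rnorm w <= 2%:R * M * rnorm (X1 w).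
Proof.
move=> [[P_lin _] [_ PX0]] M0 Pc X1_lin dc Md w.
have wE : w = P (X1 w) - P (X1 w - X0 w) by rewrite -(linB P_lin) opprB addrC subrK PX0.
have : rnorm w <= M * rnorm (X1 w) + M * (d * rnorm w).
  rewrite {1}wE; apply: (le_trans (rnormB _ _)); apply: lerD; first exact: Pc.
  by apply: (le_trans (Pc _)); apply: ler_wpM2l.
have : M * d * rnorm w <= 2^-1 * rnorm w by apply: ler_wpM2r => //; exact: rnorm_ge0.
rewrite -mulrA; set a := M * (d * _); set b := M * rnorm _; rewrite -mulrA -/b.
lra.
Qed.

(* [X1 w = u] is the fixed-point equation [w = P u + P (X0 w - X1 w)]. *)
Lemma perturbation_invertible (K : completeNormedModType R[i]) (X0 X1 P : K -> K) M d :
  bounded_inverse X0 P -> 0 <= M -> bounded_by P M -> linear X0 -> linear X1 ->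
  bounded_by (fun v => X1 v - X0 v) d -> M * d <= 2^-1 ->
  exists Y, bounded_inverse X1 Y.
Proof.
move=> XP M0 Pc X0_lin X1_lin dc Md.
have coer := perturbation_coercive XP M0 Pc X1_lin dc Md.
case: XP => [[P_lin _] [X0P _]].
pose Q w := P (X0 w - X1 w).
have Q_lin : linear Q.
  move=> a u v; rewrite /Q (linD X0_lin) (linD X1_lin) !(linZ X0_lin) !(linZ X1_lin).
  by rewrite -(linZ P_lin) -(linD P_lin) scalerBr opprD addrACA.
have Q_half : bounded_by Q 2^-1.
  move=> w; apply: (le_trans (Pc _)); rewrite -rnormN opprB.
  apply: (le_trans (ler_wpM2l M0 (dc w))); rewrite mulrA.
  by apply: ler_wpM2r => //; exact: rnorm_ge0.
have surj u : exists w, X1 w = u.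
  have [w wE] := contraction_fixpoint (P u) Q_lin Q_half; exists w.
  have X0w : X0 w = u + (X0 w - X1 w) by rewrite {1}wE /Q (linD X0_lin) !X0P.
  by rewrite -(subKr (X0 w) (X1 w)) {1}X0w addrK.
have inj w : X1 w = 0 -> w = 0.
  by move=> X1w; apply: rnorm_le0; apply: (le_trans (coer w)); rewrite X1w rnorm0 mulr0.
have [Y X1Y] := choice surj.
have YX1 w : Y (X1 w) = w.
  by apply/eqP; rewrite -subr_eq0; apply/eqP; apply: inj; rewrite (linB X1_lin) X1Y subrr.
exists Y; split; last by [].
split.
  move=> a u v; apply/eqP; rewrite -subr_eq0; apply/eqP; apply: inj.
  by rewrite (linB X1_lin) (linD X1_lin) (linZ X1_lin) !X1Y subrr.
by exists (2%:R * M)%:C => u; rewrite !rnormE -rmorphM lecR; have := coer (Y u); rewrite X1Y.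
Qed.
End Perturbation.

Section InverseDerivative.
Variables (R : realType) (K : completeNormedModType R[i]).
Variables (X Xinv : R -> K -> K) (x : R) (X' : K -> K) (cX' M : R).
Hypotheses (X_lin : forall y, linear (X y)) (dX : opderiv X x X') (X_cont : opcontinuous X x)
  (cX'0 : 0 <= cX') (X'c : bounded_by X' cX')
  (Xinv_def : forall y, (exists Y, bounded_inverse (X y) Y) -> bounded_inverse (X y) (Xinv y))
  (XXinv : bounded_inverse (X x) (Xinv x)) (M0 : 0 <= M) (Xinvc : bounded_by (Xinv x) M).

Lemma inverse_near : exists2 delta, 0 < delta & forall h, `|h| < delta ->
  bounded_inverse (X (x + h)) (Xinv (x + h)) /\ bounded_by (Xinv (x + h)) (2%:R * M).
Proof.
have e0 : 0 < 2^-1 / (M + 1) by rewrite divr_gt0 ?invr_gt0 ?ltr0n // ltr_pwDr.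
have Me : M * (2^-1 / (M + 1)) <= 2^-1.
  rewrite mulrCA; apply: ler_piMr; first by rewrite invr_ge0 ler0n.
  by rewrite ler_pdivrMr ?ltr_pwDr // mul1r lerDl.
have [d d0 Hd] := X_cont e0; exists d => // h hd.
have [Y XY] := perturbation_invertible XXinv M0 Xinvc (X_lin x) (X_lin (x + h)) (Hd h hd) Me.
have Xh : bounded_inverse (X (x + h)) (Xinv (x + h)) by apply: Xinv_def; exists Y.
split => // u; have := perturbation_coercive XXinv M0 Xinvc (X_lin _) (Hd h hd) Me (Xinv (x + h) u).
by case: Xh => _ [->].
Qed.

Let inverse_diff h u : bounded_inverse (X (x + h)) (Xinv (x + h)) ->
  Xinv (x + h) u - Xinv x u = - Xinv (x + h) (X (x + h) (Xinv x u) - X x (Xinv x u)).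
Proof.
case=> [[lin _] [_ XinvX]]; case: XXinv => _ [XXinv_id _].
by rewrite -(linN lin) opprB (linB lin) XinvX XXinv_id.
Qed.

Let inverse_continuous : opcontinuous Xinv x.
Proof.
have [d0 d00 near] := inverse_near => eps eps0.
have c0 : 0 < 2%:R * M * M + 1 by rewrite ltr_pwDr // !mulr_ge0 ?ler0n.
set e := eps / (2%:R * M * M + 1); have e0 : 0 < e by rewrite divr_gt0.
have [d d1 Hd] := X_cont e0.
exists (Num.min d0 d); first by rewrite lt_min d00 d1.
move=> h; rewrite lt_min => /andP[h0 h1] u /=.
have [Xh Xhc] := near h h0.
rewrite (inverse_diff u Xh) rnormN; apply: (le_trans (Xhc _)).
have M2 : 0 <= 2%:R * M by rewrite mulr_ge0 ?ler0n.
apply: (le_trans (ler_wpM2l M2 (Hd h h1 _))).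
apply: (le_trans (ler_wpM2l M2 (ler_wpM2l (ltW e0) (Xinvc u)))).
rewrite !mulrA; apply: ler_wpM2r; first exact: rnorm_ge0.
have -> : 2%:R * M * eps / (2%:R * M * M + 1) * M =
    eps * (2%:R * M * M / (2%:R * M * M + 1)) by ring.
apply: ler_piMr; first exact: ltW.
by rewrite ler_pdivrMr // mul1r lerDl.
Qed.

Lemma inverse_opderiv : opderiv Xinv x (fun u => - Xinv x (X' (Xinv x u))).
Proof.
have [d0 d00 near] := inverse_near => eps eps0.
set c := 2%:R * M * M + cX' * M + 1.
have c0 : 0 < c by rewrite /c ltr_pwDr // addr_ge0 // !mulr_ge0 ?ler0n.
set e := eps / c; have e0 : 0 < e by rewrite divr_gt0.
have [d1 d10 H1] := dX e0; have [d2 d20 H2] := inverse_continuous e0.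
exists (Num.min d0 (Num.min d1 d2)); first by rewrite !lt_min d00 d10 d20.
move=> h hn0; rewrite !lt_min => /and3P[h0 h1 h2] u /=.
have [Xh Xhc] := near h h0; have [[lin _] _] := Xh.
set v := Xinv x u.
rewrite (inverse_diff u Xh) -/v scalerN -(linZ lin).
set r := (h^-1)%:C *: (X (x + h) v - X x v) - X' v.
rewrite -(subrK (X' v) ((h^-1)%:C *: _)) -/r (linD lin).
have -> : forall a b c' : K, - (a + b) - - c' = - a - (b - c').
  by move=> a b c'; rewrite opprK opprD opprB addrA addrAC.
apply: (le_trans (rnormB _ _)); rewrite rnormN.
have hv : rnorm v <= M * rnorm u := Xinvc u.
have hr : rnorm r <= e * rnorm v := H1 h hn0 h1 v.
have hX : rnorm (X' v) <= cX' * rnorm v := X'c v.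
have ha : rnorm (Xinv (x + h) r) <= 2%:R * M * (e * rnorm v).
  by apply: (le_trans (Xhc r)); apply: ler_wpM2l => //; rewrite mulr_ge0 ?ler0n.
have hb : rnorm (Xinv (x + h) (X' v) - Xinv x (X' v)) <= e * (cX' * rnorm v).
  by apply: (le_trans (H2 h h2 (X' v))); rewrite ler_pM2l.
have v0 := rnorm_ge0 v; have u0 := rnorm_ge0 u.
have -> : eps = e * c by rewrite /e mulfVK // gt_eqF.
have : e * (cX' * rnorm v) <= e * (cX' * (M * rnorm u)).
  by rewrite ler_pM2l //; apply: ler_wpM2l.
have : 2%:R * M * (e * rnorm v) <= 2%:R * M * (e * (M * rnorm u)).
  by apply: ler_wpM2l; [rewrite mulr_ge0 ?ler0n | rewrite ler_pM2l].
have : 0 <= e * rnorm u by rewrite mulr_ge0 // ltW.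
rewrite /c; move: ha hb; nra.
Qed.
End InverseDerivative.

Lemma opderiv_inverse (R : realType) (K : completeNormedModType R[i]) (X Xinv : R -> K -> K) x X' :
  (forall y, bounded_op (X y)) -> opderiv X x X' ->
  (forall y, (exists Y, bounded_inverse (X y) Y) -> bounded_inverse (X y) (Xinv y)) ->
  bounded_inverse (X x) (Xinv x) ->
  opderiv Xinv x (fun u => - Xinv x (X' (Xinv x u))) /\ locally_bounded_op Xinv x.
Proof.
move=> bX dX Xinv_def XXinv.
have X_lin y : linear (X y) := (bX y).1.
have X_cont := opderiv_continuous dX (bounded_op_locally x bX).
have [cX' cX'0 X'c] := opderiv_bounded dX (bounded_op_locally x bX).
have [M M0 Xinvc] := bounded_opP XXinv.1.
split; first exact: inverse_opderiv X_lin dX X_cont cX'0 X'c Xinv_def XXinv M0 Xinvc.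
have [d d0 near] := inverse_near X_lin X_cont Xinv_def XXinv M0 Xinvc.
exists d => // h /near [[[lin _] _] Xhc]; split => //.
by exists (2%:R * M) => //; rewrite mulr_ge0 ?ler0n.
Qed.

Section NodeIdentities.
Variables (R : realType) (K : normedModType R[i]) (s1 s2 g : 'M[R[i]]_2).
Variables (A Az : K -> K) (dom : set K) (C : R -> K -> 'cV[R[i]]_2) (X Xinv : R -> K -> K).
Variables (B : R -> 'cV[R[i]]_2 -> K) (x : R).
Hypotheses (s1_unit : s1 \in unitmx) (C_lin : linear (C x)) (B_lin : linear (B x))
  (Xinv_lin : linear (Xinv x)) (XXinv : forall u, X x (Xinv x u) = u)
  (XinvX : forall u, Xinv x (X x u) = u) (Xinv_dom : forall u, dom u -> dom (Xinv x u))
  (node : forall v, dom v -> A (X x v) + X x (Az v) + B x (s1 *m C x v) = 0).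

Lemma Xinv_A_node u : dom u ->
  Xinv x (A u) = - Az (Xinv x u) - Xinv x (B x (s1 *m C x (Xinv x u))).
Proof.
move=> du; have := node (Xinv_dom du); rewrite XXinv => /(congr1 (Xinv x)).
rewrite (lin0 Xinv_lin) !(linD Xinv_lin) XinvX => /eqP.
by rewrite -addrA addr_eq0 opprD => /eqP.
Qed.

Lemma C_Xinv_deriv_identity DC u :
  (forall v, dom v -> DC v = invmx s1 *m (- (s2 *m C x (Az v)) + g *m C x v)) -> dom u ->
  s1 *m (C x (- Xinv x (B x (s2 *m C x (Xinv x u)))) + DC (Xinv x u)) =
  s2 *m C x (Xinv x (A u)) + gamma_star s1 s2 g C Xinv B x (C x (Xinv x u)).
Proof.
move=> DCE du; rewrite (Xinv_A_node du) DCE /gamma_star; last exact: Xinv_dom.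
rewrite mulmxDr mulmxA mulmxV // mul1mx (linN C_lin) (linB C_lin) (linN C_lin).
rewrite mulmxBr !mulmxN.
set a := s1 *m C x (Xinv x (B x (s2 *m _))); set b := s2 *m C x (Az _); set c := s2 *m C x (Xinv x (B x (s1 *m _))).
by rewrite addrCA -!addrA; congr (_ + _); rewrite addrCA addKr addrC.
Qed.

Lemma Xinv_B_deriv_identity e : (forall e, dom (B x (s2 *m e))) ->
  Xinv x (- (A (B x (s2 *m (invmx s1 *m (s1 *m e)))) + B x (g *m (invmx s1 *m (s1 *m e))))) +
    - Xinv x (B x (s2 *m C x (Xinv x (B x (s1 *m e))))) =
  Az (Xinv x (B x (s2 *m e))) - Xinv x (B x (gamma_star s1 s2 g C Xinv B x e)).
Proof.
move=> B_dom; have -> : invmx s1 *m (s1 *m e) = e by rewrite mulmxA mulVmx // mul1mx.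
rewrite (linN Xinv_lin) (linD Xinv_lin) (Xinv_A_node (B_dom e)) /gamma_star.
rewrite !(linB B_lin) (linD B_lin) !(linB Xinv_lin) (linD Xinv_lin).
set z := Az _; set p := Xinv x (B x (s1 *m _)); set r := Xinv x (B x (g *m e)).
set q := Xinv x (B x (s2 *m _)).
by rewrite !opprD !opprK -!addrA; congr (_ + _); rewrite addrC -addrA.
Qed.
End NodeIdentities.

Theorem mainTheorem6 (R : realType) (K : completeNormedModType R[i])
  (ip kf : K -> K -> R[i]) (s1 s2 g : 'M[R[i]]_2)
  (SA SZ : R -> K -> K) (dom : set K) (A Az : K -> K)
  (C : R -> K -> 'cV[R[i]]_2) (X : R -> K -> K) (B : R -> 'cV[R[i]]_2 -> K)
  (Xinv : R -> K -> K) (Omega : set R) :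
  hilbert_ip ip -> krein_form kf ->
  s1 \in unitmx -> mxadj s1 = s1 -> mxadj s2 = s2 -> mxadj g = - g ->
  C0_group SA -> generator SA dom A ->
  C0_group SZ -> generator SZ dom Az ->
  prevessel s1 s2 g A Az dom C X B ->
  (forall y, (exists Y, bounded_inverse (X y) Y) -> bounded_inverse (X y) (Xinv y)) ->
  (forall x, Omega x ->
     (exists Y, bounded_inverse (X x) Y) /\ (forall u, dom u -> dom (Xinv x u))) ->
  forall x, Omega x ->
    (exists D, has_opderiv (fun y u => C y (Xinv y u)) x D /\
       forall u, dom u ->
         s1 *m D u = s2 *m C x (Xinv x (A u)) + gamma_star s1 s2 g C Xinv B x (C x (Xinv x u))) /\
    (exists E, has_opderiv (fun y e => Xinv y (B y e)) x E /\
       forall e, E (s1 *m e) = Az (Xinv x (B x (s2 *m e))) - Xinv x (B x (gamma_star s1 s2 g C Xinv B x e))).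
Proof.
move=> _ _ s1_unit _ _ _ _ _ _ _ V Xinv_def inv x Ox.
have [[Y XY] Xinv_dom] := inv x Ox.
have XXinv : bounded_inverse (X x) (Xinv x) by apply: Xinv_def; exists Y.
have [[_ [_ [_ [_ node]]]] [B_dom [dB [[DC [dC DCE]] dX]]]] := V x.
move/has_opderivE: dB => dB; move/has_opderivE: dC => dC; move/has_opderivE: dX => dX.
have C_loc : locally_bounded_op C x by apply: bounded_op_locally => y; exact: (V y).1.1.
have B_loc : locally_bounded_op B x by apply: bounded_op_locally => y; exact: (V y).1.2.2.1.
have [dXinv Xinv_loc] := opderiv_inverse (fun y => (V y).1.2.1) dX Xinv_def XXinv.
have [[Xinv_lin _] [XXinv_id XinvX_id]] := XXinv.
have C_lin : linear (C x) := (V x).1.1.1.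
have B_lin : linear (B x) := (V x).1.2.2.1.1.
split; eexists; (split; first by apply/has_opderivE; apply: opderiv_comp; eassumption).
- move=> u du /=.
  have := C_Xinv_deriv_identity s1_unit C_lin Xinv_lin XXinv_id XinvX_id Xinv_dom node DCE du.
  exact: id.
- move=> e /=.
  exact: Xinv_B_deriv_identity s1_unit B_lin Xinv_lin XXinv_id XinvX_id Xinv_dom node e B_dom.
Qed.
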